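(* Let $\tau:\mathcal A\to\mathcal A^+$ be a substitution satisfying the standing assumptions below, with one-sided subshift $(X_\tau,\sigma)$. Then: (i) every $y\in\tau(X_\tau)$ can be written in exactly one way as $y=\tau(x)$ with $x\in X_\tau$; (ii) every $y\in X_\tau\setminus\tau(X_\tau)$ can be written as $y=\sigma^k(\tau(x))$ with $x=x_0x_1\ldots\in X_\tau$ and $0<k<|\tau(x_0)|$, and in any such representation $\sigma(x)$ is uniquely determined by $y$ (i.e. if $y=\sigma^k(\tau(x))=\sigma^{k'}(\tau(x'))$ with $0<k<|\tau(x_0)|$ and $0<k'<|\tau(x'_0)|$, then $\sigma(x)=\sigma(x')$).
   Context: $\mathcal A$ is a finite alphabet, $\mathcal A^+$ the set of finite words over $\mathcal A$; for a word $w$, $|w|$ is its length and $w_{[i,j]}=w_i\cdots w_j$. A substitution $\tau:\mathcal A\to\mathcal A^+$ is extended to words and to one-sided sequences $x=x_0x_1\ldots\in\mathcal A^{\mathbb N}$ by concatenation, $\tau(x)=\tau(x_0)\tau(x_1)\cdots$. $\sigma$ is the left shift on $\mathcal A^{\mathbb N}$ (product of discrete topologies). A fixed point is $u\in\mathcal A^{\mathbb N}$ with $\tau(u)=u$, and $X_\tau$ is the closure of $\{\sigma^n(u):n\ge0\}$. Standing assumptions: $\tau$ is primitive (some $k$ such that every letter occurs in $\tau^k(a)$ for every $a$), $X_\tau$ is aperiodic (infinite), $\tau$ has a fixed point $u$, $\tau$ is (unilaterally) recognizable, and every power $\tau^n$ ($n\ge1$) is injective on letters. Recognizable means: with $E=\{0\}\cup\{|\tau(u_{[0,p-1]})|:p>0\}$,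 there is $L$ such that whenever $u_{[i,i+L-1]}=u_{[j,j+L-1]}$ and $i\in E$, then $j\in E$. *)

From Stdlib Require List.
From mathcomp Require Import all_boot.
Set Implicit Arguments. Unset Strict Implicit. Unset Printing Implicit Defensive.

Section Subst.
Variable A : finType.

Definition aseq := nat -> A.

Definition shift (x : aseq) : aseq := fun n => x n.+1.

Definition subst_word (tau : A -> seq A) (w : seq A) : seq A :=
  flatten (map tau w).

Definition subst_pow (tau : A -> seq A) (n : nat) (a : A) : seq A :=
  iter n (subst_word tau) [:: a].

(* tau extended to one-sided sequences by concatenation:
   tau(x) = tau(x_0) tau(x_1) ...; since every tau(a) is non-empty, the
   n-th letter of tau(x) is the n-th letter of tau(x_0 ... x_n).
   (the default x 0 of nth is never used when tau is non-erasing) *)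
Definition subst_seq (tau : A -> seq A) (x : aseq) : aseq :=
  fun n => nth (x 0) (subst_word tau [seq x i | i <- iota 0 n.+1]) n.

Definition factor (x : aseq) (i L : nat) : seq A := [seq x (i + t) | t <- iota 0 L].

(* X_tau : closure of the shift-orbit of u in the product topology *)
Definition in_orbit_closure (u : aseq) (y : aseq) : Prop :=
  forall N, exists n, forall i, i < N -> y i = u (n + i).

Definition non_erasing (tau : A -> seq A) : Prop := forall a, 0 < size (tau a).

Definition primitive (tau : A -> seq A) : Prop :=
  exists k, forall a b : A, b \in subst_pow tau k a.

Definition fixed_point (tau : A -> seq A) (u : aseq) : Prop := subst_seq tau u = u.

Definition infinite_subshift (u : aseq) : Prop :=
  ~ exists s : seq aseq, forall y, in_orbit_closure u y -> List.In y s.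

Definition cut_points (tau : A -> seq A) (u : aseq) (i : nat) : Prop :=
  i = 0 \/ exists p, 0 < p /\ i = size (subst_word tau (factor u 0 p)).

Definition recognizable (tau : A -> seq A) (u : aseq) : Prop :=
  exists L, forall i j, factor u i L = factor u j L ->
    cut_points tau u i -> cut_points tau u j.

Definition powers_injective_on_letters (tau : A -> seq A) : Prop :=
  forall n, 0 < n -> injective (subst_pow tau n).

End Subst.

From mathcomp Require Import all_boot zify.
From Stdlib Require Import Classical ClassicalEpsilon FunctionalExtensionality.
Set Implicit Arguments. Unset Strict Implicit. Unset Printing Implicit Defensive.

(* A representation y = σ^k(τ x) with x in X_τ cuts y at the positions
   |τ(x_0 ... x_(m-1))| - k.  Every finite window of x is a factor of u, so every
   finite window of τ(x) is a factor of τ(u) = u, and recognizability of u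
   transfers cut points from one representation of y to any other: two
   representations cut y at the same places.  Equal cuts put the blocks τ(x_m) and
   τ(x'_m) at the same place of y, so injectivity of τ gives x_m = x'_m for m >= 1,
   and also for m = 0 when k = k' = 0.  Existence in (ii) is compactness: y is a
   limit of factors of u = τ(u), each a shifted image of a factor of u. *)

Lemma mkseqD (T : Type) (x : nat -> T) p q :
  mkseq x (p + q) = mkseq x p ++ mkseq (fun t => x (p + t)) q.
Proof.
by rewrite /mkseq iotaD map_cat add0n -{2}[p]addn0 iotaDl -map_comp.
Qed.

Lemma eq_mkseq_lt (T : Type) (x z : nat -> T) M :
  (forall t, t < M -> x t = z t) -> mkseq x M = mkseq z M.
Proof. by move=> xz; apply/eq_in_map => t; rewrite mem_iota => /andP[_]; apply: xz. Qed.

Lemma incr_eq_of_same_range (f g : nat -> nat) :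
  (forall m, f m < f m.+1) -> (forall m, g m < g m.+1) ->
  (forall m, exists m', g m' = f m) -> (forall m, exists m', f m' = g m) ->
  f =1 g.
Proof.
move=> /(homo_ltn ltn_trans)/leq_mono fle /(homo_ltn ltn_trans)/leq_mono gle.
move=> fg gf; elim/ltn_ind => m IH.
have [j gj] := fg m; have [j' fj'] := gf m.
have mj : m <= j.
  by rewrite leqNgt; apply/negP => jm; move: (jm); rewrite -(leqW_mono fle) IH // gj ltnn.
have mj' : m <= j'.
  by rewrite leqNgt; apply/negP => jm; move: (jm); rewrite -(leqW_mono gle) -IH // fj' ltnn.
by apply/eqP; rewrite eqn_leq -{1}fj' fle mj' -gj gle mj.
Qed.

Section Cuts.
Variables (A : finType) (tau : A -> seq A).
Hypothesis tau_ne : non_erasing tau.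

Definition cutpos (x : aseq A) (p : nat) : nat := size (subst_word tau (mkseq x p)).

Lemma iter_shiftE k (x : aseq A) i : iter k (@shift A) x i = x (k + i).
Proof. by elim: k x i => [|k IH] x i //=; rewrite /shift IH addSnnS. Qed.

Lemma eq_iter_shift k k' (x x' : aseq A) :
  iter k (@shift A) x = iter k' (@shift A) x' -> forall i, x (k + i) = x' (k' + i).
Proof. by move=> e i; rewrite -!iter_shiftE e. Qed.

Lemma subst_word_cat s1 s2 :
  subst_word tau (s1 ++ s2) = subst_word tau s1 ++ subst_word tau s2.
Proof. by rewrite /subst_word map_cat flatten_cat. Qed.

Lemma cutposD x p q : cutpos x (p + q) = cutpos x p + cutpos (fun t => x (p + t)) q.
Proof. by rewrite /cutpos mkseqD subst_word_cat size_cat. Qed.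

Lemma cutpos1 x : cutpos x 1 = size (tau (x 0)).
Proof. by rewrite /cutpos /subst_word /= cats0. Qed.

Lemma cutposS x p : cutpos x p.+1 = cutpos x p + size (tau (x p)).
Proof. by rewrite -addn1 cutposD cutpos1 addn0. Qed.

Lemma eq_cutpos x z m : (forall t, t < m -> x t = z t) -> cutpos x m = cutpos z m.
Proof. by move=> xz; rewrite /cutpos (eq_mkseq_lt xz). Qed.

Lemma ltn_cutposS x p : cutpos x p < cutpos x p.+1.
Proof. by rewrite cutposS -addn1 leq_add2l tau_ne. Qed.

Lemma leq_cutpos x : {mono cutpos x : p q / p <= q}.
Proof. exact/leq_mono/(homo_ltn ltn_trans)/ltn_cutposS. Qed.

Lemma leq_id_cutpos x p : p <= cutpos x p.
Proof. by elim: p => // p IH; exact: leq_ltn_trans IH (ltn_cutposS x p). Qed.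

Lemma cutpos_bracket x n : exists p, cutpos x p <= n < cutpos x p.+1.
Proof.
elim: n => [|n [p /andP[pn np]]]; first by exists 0; exact: ltn_cutposS x 0.
case: (ltnP n.+1 (cutpos x p.+1)) => [np1|pn1]; first by exists p; rewrite np1 ltnW.
exists p.+1; have := ltn_cutposS x p.+1; lia.
Qed.

Lemma nth_subst_mkseq x a b n d d' : a <= b -> n < cutpos x a ->
  nth d (subst_word tau (mkseq x b)) n = nth d' (subst_word tau (mkseq x a)) n.
Proof.
move=> ab na; rewrite -(subnKC ab) mkseqD subst_word_cat nth_cat -/(cutpos x a) na.
exact: set_nth_default.
Qed.

Lemma subst_seq_nth x M n d : n < cutpos x M ->
  subst_seq tau x n = nth d (subst_word tau (mkseq x M)) n.
Proof.
move=> nM; rewrite /subst_seq -/(mkseq x n.+1).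
case: (leqP n.+1 M) => nM'.
  by symmetry; apply: nth_subst_mkseq => //; exact: leq_id_cutpos.
by apply: nth_subst_mkseq; rewrite // ltnW.
Qed.

Lemma eq_subst_seq x z M n : (forall t, t < M -> x t = z t) -> n < cutpos x M ->
  subst_seq tau x n = subst_seq tau z n.
Proof.
move=> xz nM; have nM' := nM; rewrite (eq_cutpos xz) in nM'.
by rewrite (subst_seq_nth (x 0) nM) (subst_seq_nth (x 0) nM') (eq_mkseq_lt xz).
Qed.

Lemma subst_seq_cutposD x p j :
  subst_seq tau x (cutpos x p + j) = subst_seq tau (fun t => x (p + t)) j.
Proof.
have jS : j < cutpos (fun t => x (p + t)) j.+1 by exact: leq_id_cutpos.
have pjS : cutpos x p + j < cutpos x (p + j.+1) by rewrite cutposD ltn_add2l.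
rewrite (subst_seq_nth (x 0) pjS) (subst_seq_nth (x 0) jS) mkseqD subst_word_cat.
by rewrite nth_cat -/(cutpos x p) ltnNge leq_addr addKn.
Qed.

Lemma subst_seq_block x m j d : j < size (tau (x m)) ->
  subst_seq tau x (cutpos x m + j) = nth d (tau (x m)) j.
Proof.
move=> jm; have j1 : j < cutpos (fun t => x (m + t)) 1 by rewrite cutpos1 addn0.
by rewrite subst_seq_cutposD (subst_seq_nth d j1) /subst_word /= cats0 addn0.
Qed.

End Cuts.

Section Recognizability.
Variables (A : finType) (tau : A -> seq A) (u : aseq A).
Hypotheses (tau_ne : non_erasing tau) (u_fix : fixed_point tau u).
Hypothesis u_rec : recognizable tau u.

Lemma cut_pointsE i : cut_points tau u i <-> exists p, i = cutpos tau u p.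
Proof.
split; first by case=> [->|[p [_ ->]]]; [exists 0 | exists p].
by case=> -[|p] ->; [left | right; exists p.+1].
Qed.

Lemma cutpos_window x M p m : (forall i, i < M -> x i = u (p + i)) -> m <= M ->
  cutpos tau u (p + m) = cutpos tau u p + cutpos tau x m.
Proof.
move=> xu mM; rewrite cutposD; congr (_ + _); apply: eq_cutpos => t tm.
by rewrite xu // (leq_trans tm mM).
Qed.

Lemma subst_seq_window x M p : (forall i, i < M -> x i = u (p + i)) ->
  forall q, q < M -> subst_seq tau x q = u (cutpos tau u p + q).
Proof.
move=> xu q qM.
have -> : u (cutpos tau u p + q) = subst_seq tau u (cutpos tau u p + q) by rewrite u_fix.
rewrite (subst_seq_cutposD tau_ne).
apply: (eq_subst_seq tau_ne xu); exact: leq_trans qM (leq_id_cutpos tau_ne x M).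
Qed.

Lemma cut_transfer x x' k k' i :
  in_orbit_closure u x -> in_orbit_closure u x' ->
  (forall j, subst_seq tau x (k + j) = subst_seq tau x' (k' + j)) ->
  (exists m, cutpos tau x m = k + i) -> exists m', cutpos tau x' m' = k' + i.
Proof.
have [L u_recL] := u_rec.
move=> x_orb x'_orb xx' [m xm].
(* Cut points of τ(x) below M are controlled by the factor u_[p, p+M) of u,
   and the length-L windows at k + i and k' + i fit below M. *)
pose M := k + k' + i + L + 1.
have [p xp] := x_orb M; have [p' xp'] := x'_orb M.
have mM : m <= M.
  by rewrite -(leq_cutpos tau_ne x) xm (leq_trans _ (leq_id_cutpos tau_ne x M)) // /M; lia.
have same_factor :
    factor u (cutpos tau u p + (k + i)) L = factor u (cutpos tau u p' + (k' + i)) L.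
  apply/eq_in_map => t; rewrite mem_iota => /andP[_ tL].
  rewrite -!addnA -(subst_seq_window xp) ?xx' ?(subst_seq_window xp') // /M; lia.
have u_cut : cut_points tau u (cutpos tau u p + (k + i)).
  by apply/cut_pointsE; exists (p + m); rewrite (cutpos_window xp) ?xm.
have [q uq] := (cut_pointsE _).1 (u_recL _ _ same_factor u_cut).
have pq : p' <= q by rewrite -(leq_cutpos tau_ne u) -uq leq_addr.
have qM : q - p' <= M.
  rewrite leq_subLR -(leq_cutpos tau_ne u) (cutpos_window xp') // -uq leq_add2l.
  by rewrite (leq_trans _ (leq_id_cutpos tau_ne x' M)) // /M; lia.
exists (q - p'); apply: (@addnI (cutpos tau u p')).
by rewrite -(cutpos_window xp') // subnKC.
Qed.

Lemma cut_transfer_succ x x' k k' m :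
  in_orbit_closure u x -> in_orbit_closure u x' ->
  k <= cutpos tau x m.+1 -> (k == 0) = (k' == 0) ->
  (forall j, subst_seq tau x (k + j) = subst_seq tau x' (k' + j)) ->
  exists m', cutpos tau x' m'.+1 - k' = cutpos tau x m.+1 - k.
Proof.
move=> x_orb x'_orb km kk' xx'.
have [[|m'] x'm'] := cut_transfer (i := cutpos tau x m.+1 - k) x_orb x'_orb xx'
  (ex_intro _ m.+1 (esym (subnKC km))); last by exists m'; rewrite x'm' addKn.
(* The cut 0 of x' is reached only when k' = 0 = k, but cuts of x beyond 0 are positive. *)
move: x'm' => /esym/eqP; rewrite addn_eq0 subn_eq0 => /andP[/eqP k'0 xk].
move: kk' xk; rewrite k'0 eqxx => /eqP ->.
by rewrite leqNgt (leq_trans _ (leq_id_cutpos tau_ne x m.+1)).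
Qed.

End Recognizability.

Section Rigidity.
Variables (A : finType) (tau : A -> seq A) (u : aseq A).
Hypotheses (tau_ne : non_erasing tau) (tau_inj : injective tau).
Hypotheses (u_fix : fixed_point tau u) (u_rec : recognizable tau u).

Lemma eq_letter_of_cuts x x' k k' m :
  (forall j, subst_seq tau x (k + j) = subst_seq tau x' (k' + j)) ->
  k <= cutpos tau x m -> k' <= cutpos tau x' m ->
  cutpos tau x m - k = cutpos tau x' m - k' ->
  cutpos tau x m.+1 - k = cutpos tau x' m.+1 - k' -> x m = x' m.
Proof.
move=> xx' km k'm cut_m.
rewrite !cutposS -(addnBAC _ km) -(addnBAC _ k'm) cut_m => /addnI size_m.
apply: tau_inj; apply: (eq_from_nth (x0 := x m) size_m) => j jm.
rewrite -(subst_seq_block tau_ne _ jm) -(subst_seq_block tau_ne _ (j := j)) -?size_m //.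
by rewrite -(subnKC km) -(subnKC k'm) -!addnA xx' cut_m.
Qed.

Variables (x x' : aseq A) (k k' : nat).
Hypotheses (x_orb : in_orbit_closure u x) (x'_orb : in_orbit_closure u x').
Hypotheses (kx : k <= cutpos tau x 1) (k'x' : k' <= cutpos tau x' 1).
Hypothesis kk' : (k == 0) = (k' == 0).
Hypothesis xx' : forall j, subst_seq tau x (k + j) = subst_seq tau x' (k' + j).

Lemma rep_cutposE m : cutpos tau x m.+1 - k = cutpos tau x' m.+1 - k'.
Proof.
have kxS n : k <= cutpos tau x n.+1 by rewrite (leq_trans kx) ?leq_cutpos.
have k'x'S n : k' <= cutpos tau x' n.+1 by rewrite (leq_trans k'x') ?leq_cutpos.
apply: (incr_eq_of_same_range (f := fun n => cutpos tau x n.+1 - k)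
                              (g := fun n => cutpos tau x' n.+1 - k')) => n.
- by rewrite ltn_sub2r ?ltn_cutposS // (leq_ltn_trans (kxS n)) ?ltn_cutposS.
- by rewrite ltn_sub2r ?ltn_cutposS // (leq_ltn_trans (k'x'S n)) ?ltn_cutposS.
- exact: (cut_transfer_succ tau_ne u_fix u_rec).
- by apply: (cut_transfer_succ tau_ne u_fix u_rec) => // j; rewrite xx'.
Qed.

Lemma rep_shiftE : shift x = shift x'.
Proof.
apply: functional_extensionality => m; apply: (eq_letter_of_cuts xx'); rewrite ?rep_cutposE //.
- by rewrite (leq_trans kx) ?leq_cutpos.
- by rewrite (leq_trans k'x') ?leq_cutpos.
Qed.

End Rigidity.

Section Compactness.
Variables (T : finType) (z : nat -> nat -> T).

Definition frequent_prefix (w : seq T) : Prop :=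
  forall N0, exists2 N, N0 <= N & mkseq (z N) (size w) = w.

Lemma frequent_prefix_rcons w :
  frequent_prefix w -> exists a, frequent_prefix (rcons w a).
Proof.
move=> w_freq; apply: NNPP => /not_ex_all_not rare.
have bound a : exists N0, forall N, N0 <= N -> mkseq (z N) (size w).+1 <> rcons w a.
  have [N0 N0_bound] := not_all_ex_not _ _ (rare a).
  by exists N0 => N N0N wa; apply: N0_bound; exists N; rewrite ?size_rcons.
pose N0 a := epsilon (inhabits 0)
  (fun N0 => forall N, N0 <= N -> mkseq (z N) (size w).+1 <> rcons w a).
have [N N0N zw] := w_freq (\max_a N0 a).
apply: (epsilon_spec _ _ (bound (z N (size w)))) (_ : N0 _ <= N) _.
  exact: leq_trans (leq_bigmax _) N0N.
by rewrite mkseqS zw.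
Qed.

Definition next_letter (w : seq T) : T :=
  epsilon (inhabits (z 0 0)) (fun a => frequent_prefix (rcons w a)).

Fixpoint limit_prefix (n : nat) : seq T :=
  if n is n'.+1 then rcons (limit_prefix n') (next_letter (limit_prefix n')) else [::].

Definition limit_point (i : nat) : T := nth (z 0 0) (limit_prefix i.+1) i.

Lemma frequent_limit_prefix n : frequent_prefix (limit_prefix n).
Proof.
elim: n => [N0|n IH]; first by exists N0.
exact: epsilon_spec (frequent_prefix_rcons IH).
Qed.

Lemma size_limit_prefix n : size (limit_prefix n) = n.
Proof. by elim: n => //= n IH; rewrite size_rcons IH. Qed.

Lemma limit_prefixE n : limit_prefix n = mkseq limit_point n.
Proof.
elim: n => // n IH.
by rewrite mkseqS -IH /limit_point /= nth_rcons size_limit_prefix ltnn eqxx.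
Qed.

Lemma limit_pointP M N0 :
  exists2 N, N0 <= N & forall i, i < M -> z N i = limit_point i.
Proof.
have [N N0N zN] := frequent_limit_prefix M N0.
exists N => // i iM.
move: zN; rewrite size_limit_prefix limit_prefixE => /(congr1 (nth (z 0 0) ^~ i)).
by rewrite !nth_mkseq.
Qed.

End Compactness.

Section Desubstitution.
Variables (A : finType) (tau : A -> seq A) (u : aseq A).
Hypotheses (tau_ne : non_erasing tau) (u_fix : fixed_point tau u).

Lemma orbit_closure_window y : in_orbit_closure u y -> forall N,
  exists pk : nat * nat, pk.2 < size (tau (u pk.1)) /\
    forall i, i < N -> y i = u (cutpos tau u pk.1 + pk.2 + i).
Proof.
move=> y_orb N; have [n yn] := y_orb N.
have [p /andP[pn np]] := cutpos_bracket tau_ne u n.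
exists (p, n - cutpos tau u p); split=> /=; first by rewrite ltn_subLR // -cutposS.
by move=> i iN; rewrite subnKC // yn.
Qed.

Lemma orbit_closure_desubst y : in_orbit_closure u y ->
  exists x k, [/\ in_orbit_closure u x, k < size (tau (x 0))
                & y = iter k (@shift A) (subst_seq tau x)].
Proof.
move=> y_orb.
pose window N (pk : nat * nat) := pk.2 < size (tau (u pk.1)) /\
  forall i, i < N -> y i = u (cutpos tau u pk.1 + pk.2 + i).
pose pk N := epsilon (inhabits (0, 0)) (window N).
have pkP N : window N (pk N) := epsilon_spec _ _ (orbit_closure_window y_orb N).
pose B := \max_a size (tau a).
have pk_B N : (pk N).2 < B.+1.
  exact: leq_trans (pkP N).1 (leqW (leq_bigmax (F := fun a => size (tau a)) _)).
(* Offsets are bounded by B, so pairing them with the tails of u keeps a finite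
   alphabet, and one compactness argument produces both k and x. *)
pose z N i := (inord (pk N).2 : 'I_B.+1, u ((pk N).1 + i)).
pose c := limit_point z.
have cP M N0 : exists2 N, N0 <= N &
    val (c 0).1 = (pk N).2 /\ forall i, i < M -> (c i).2 = u ((pk N).1 + i).
  have [N N0N cN] := limit_pointP z M.+1 N0.
  exists N => //; rewrite /c; split; first by rewrite -cN //= (inordK (pk_B N)).
  by move=> i iM; rewrite -cN // ltnW.
exists (fun i => (c i).2), (val (c 0).1); split.
- by move=> M; have [N _ [_ cN]] := cP M 0; exists (pk N).1.
- by have [N _ [-> cN]] := cP 1 0; rewrite cN // addn0 (pkP N).1.
- apply: functional_extensionality => i; rewrite iter_shiftE.
  have [N iN [c0 cN]] := cP (val (c 0).1 + i).+1 i.+1.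
  by rewrite (pkP N).2 // -addnA (subst_seq_window tau_ne u_fix cN) ?c0.
Qed.

End Desubstitution.

Theorem corollary3 (A : finType) (tau : A -> seq A) (u : aseq A) :
  non_erasing tau ->
  primitive tau ->
  infinite_subshift u ->
  fixed_point tau u ->
  recognizable tau u ->
  powers_injective_on_letters tau ->
  (* (i) *)
  (forall y : aseq A,
     (exists x, in_orbit_closure u x /\ y = subst_seq tau x) ->
     exists! x, in_orbit_closure u x /\ y = subst_seq tau x) /\
  (* (ii) *)
  (forall y : aseq A,
     in_orbit_closure u y ->
     ~ (exists x, in_orbit_closure u x /\ y = subst_seq tau x) ->
     (exists (x : aseq A) (k : nat),
        [/\ in_orbit_closure u x, 0 < k, k < size (tau (x 0))
          & y = iter k (@shift A) (subst_seq tau x)]) /\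
     (forall (x x' : aseq A) (k k' : nat),
        in_orbit_closure u x -> 0 < k -> k < size (tau (x 0)) ->
        y = iter k (@shift A) (subst_seq tau x) ->
        in_orbit_closure u x' -> 0 < k' -> k' < size (tau (x' 0)) ->
        y = iter k' (@shift A) (subst_seq tau x') ->
        shift x = shift x')).
Proof.
move=> tau_ne _ _ u_fix u_rec pow_inj.
have tau_inj : injective tau.
  by move=> a b ab; apply: (pow_inj 1) => //; rewrite /subst_pow /subst_word /= !cats0 ab.
split=> [y [x [x_orb ->]]|y y_orb not_img].
  exists x; split=> // x' [x'_orb xx'].
  have xx'j j : subst_seq tau x (0 + j) = subst_seq tau x' (0 + j) by rewrite xx'.
  have cuts := rep_cutposE tau_ne u_fix u_rec x_orb x'_orb (leq0n _) (leq0n _) erefl xx'j.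
  have tails := rep_shiftE tau_ne tau_inj u_fix u_rec x_orb x'_orb
    (leq0n _) (leq0n _) erefl xx'j.
  apply: functional_extensionality => -[|m]; last exact: (congr1 (fun s => s m) tails).
  exact: (eq_letter_of_cuts tau_ne tau_inj xx'j _ _ _ (cuts 0)).
split=> [|x x' k k' x_orb k0 kx yx x'_orb k'0 k'x' yx'].
  have [x [k [x_orb kx yx]]] := orbit_closure_desubst tau_ne u_fix y_orb.
  exists x, k; split=> //; rewrite lt0n; apply: contra_notN not_img => /eqP k0.
  by exists x; rewrite yx k0.
apply: (rep_shiftE tau_ne tau_inj u_fix u_rec x_orb x'_orb (k := k) (k' := k')).
- by rewrite cutpos1 ltnW.
- by rewrite cutpos1 ltnW.
- by move: k0 k'0; rewrite !lt0n => /negPf-> /negPf->.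
- by apply: eq_iter_shift; rewrite -yx -yx'.
Qed.
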